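(* Let $p/q$ be a reduced fraction with $q\ge1$. For any integer $0 \le N <q$ and any $x \in \mathbb{R}$, \[ P_N (p/q,x) \cdot P_{q-N-1} (p/q,-x) = \begin{cases} \frac{|\sin (\pi qx)|}{|\sin (\pi x)|} & \text{if } x \notin \mathbb{Z}, \\ q & \text{if } x \in \mathbb{Z} . \end{cases} \] In particular, for any $x \in \mathbb{R}$, $P_{q-1}(p/q,x)$ equals $\frac{|\sin (\pi qx)|}{|\sin (\pi x)|}$ if $x\notin\mathbb{Z}$ and $q$ if $x\in\mathbb{Z}$.
   Context: For real $\beta,x$ and integer $N\ge0$, $P_N(\beta,x)=\prod_{n=1}^N|2\sin(\pi(n\beta+x))|$ (empty product $=1$). *)

From Stdlib Require Import Reals ZArith.
Open Scope R_scope.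

Fixpoint P (N : nat) (beta x : R) : R :=
  match N with
  | O => 1
  | S m => P m beta x * Rabs (2 * sin (PI * (INR (S m) * beta + x)))
  end.

Definition is_integer (x : R) : Prop := exists k : Z, x = IZR k.

(* Squaring removes the absolute values.  With b = p/q, the n-th factor of
   P_{q-N-1}(b,-x) is, up to sign, the (q-n)-th factor of P_{q-1}(b,x), because
   qb = p is an integer; so the square of the left-hand side is
   prod_{n=1}^{q-1} 4 sin^2(pi (n b + x)) whatever N is.  That factor is
   |w - z^n|^2 with w = e^{-2 pi i x} and z = e^{2 pi i b}, a primitive q-th root
   of unity because gcd(p,q) = 1, and prod_{n=1}^{q-1} (w - z^n) is
   1 + w + ... + w^{q-1} = (w^q - 1)/(w - 1). *)

From Stdlib Require Import Reals Lra Lia Znumtheory.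
From mathcomp Require Import ssreflect ssrbool.
From mathcomp Require all_boot all_algebra complex Rstruct zify.
Open Scope R_scope.

Definition chord (t : R) : R := 2 * sin (PI * t).

Lemma chord_opp t : chord (- t) = - chord t.
Proof. by rewrite /chord -Ropp_mult_distr_r sin_neg; ring. Qed.

Lemma chord_sq_shift t m : chord (t + IZR m) ^ 2 = chord t ^ 2.
Proof.
have sm : sin (PI * IZR m) = 0 by apply: sin_eq_0_1; exists m; ring.
have := sin2_cos2 (PI * IZR m); rewrite /Rsqr sm => cm.
by rewrite /chord Rmult_plus_distr_l sin_plus sm; nra.
Qed.

Lemma chord_eq0 t : chord t = 0 <-> is_integer t.
Proof.
rewrite /chord; split=> [h | [m ->]].
- have [m hm] : exists m, PI * t = IZR m * PI by apply: sin_eq_0_0; lra.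
  exists m; have := PI_RGT_0; nra.
- by rewrite (sin_eq_0_1 _ (ex_intro _ m (Rmult_comm _ _))); ring.
Qed.

Lemma is_integer_opp x : is_integer x -> is_integer (- x).
Proof. by case=> m ->; exists (- m)%Z; rewrite opp_IZR. Qed.

Lemma P_ge0 N b x : 0 <= P N b x.
Proof.
elim: N => [|N IH] /=; first lra.
by apply: Rmult_le_pos => //; apply: Rabs_pos.
Qed.

Lemma dvd_of_integer_mul_frac (p : Z) (q k : nat) :
  (0 < q)%nat -> rel_prime p (Z.of_nat q) ->
  is_integer (INR k * (IZR p / INR q)) -> (Z.of_nat q | Z.of_nat k)%Z.
Proof.
move=> q_gt0 copq [m hm].
have q_neq0 : INR q <> 0 by apply: not_0_INR; lia.
apply: (Gauss _ p); last exact: rel_prime_sym.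
by exists m; apply: eq_IZR; rewrite !mult_IZR -!INR_IZR_INZ -hm; field.
Qed.

Lemma Rabs_eq_of_pow2_eq (a b : R) : a ^ 2 = b ^ 2 -> Rabs a = Rabs b.
Proof. by move=> e; apply: Rsqr_eq_abs_0; rewrite !Rsqr_pow2. Qed.

(* MathComp is imported only inside this section: its notations would otherwise
   change the reading of [(_ <= _)%nat] in the statement of [proposition1]. *)
Section ComplexProducts.
Import all_boot all_algebra complex Rstruct zify GRing.Theory.
Local Open Scope ring_scope.
Local Open Scope R_scope.

Ltac to_Rops := rewrite -?RplusE -?RminusE -?RmultE -?RoppE.

Definition sqnorm (z : R[i]) : R := Re z ^ 2 + Im z ^ 2.
Arguments sqnorm z%_ring_scope.

Lemma sqnormM (w z : R[i]) : sqnorm (w * z) = sqnorm w * sqnorm z.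
Proof. by case: w z => [a b] [c d]; rewrite /sqnorm /=; to_Rops; ring. Qed.

Lemma sqnorm1 : sqnorm 1 = 1.
Proof. by rewrite /sqnorm /= -R1E -R0E; ring. Qed.

Lemma sqnorm_prod (I : Type) (r : seq I) (Q : pred I) (F : I -> R[i]) :
  sqnorm (\prod_(i <- r | Q i) F i) = \big[Rmult/1]_(i <- r | Q i) sqnorm (F i).
Proof. exact: (big_morph sqnorm sqnormM sqnorm1). Qed.

Lemma sqnorm_eq0 z : sqnorm z = 0 -> z = 0%R.
Proof.
case: z => a b; rewrite /sqnorm /= => h.
have [-> ->] : a = 0 /\ b = 0 by split; nra.
by rewrite R0E.
Qed.

Lemma sqnorm_natr n : sqnorm n%:R = INR n ^ 2.
Proof.
by rewrite -(rmorph_nat (@real_complex R)) /sqnorm /= -INRE -R0E; ring.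
Qed.

(* The argument scopes let [sqnorm (cis (2 * PI * s) - 1)] read [-] in the ring
   of complex numbers and [2 * PI * s] in the reals. *)
Definition cis (t : R) : R[i] := Complex (cos t) (sin t).
Arguments cis t%_R_scope.

Lemma cisD s t : (cis s * cis t)%R = cis (s + t).
Proof. by rewrite /cis cos_plus sin_plus /=; congr Complex; to_Rops; ring. Qed.

Lemma cisXn t k : (cis t ^+ k)%R = cis (INR k * t).
Proof.
elim: k => [|k IH]; first by rewrite /cis Rmult_0_l cos_0 sin_0.
by rewrite exprS IH cisD S_INR; congr cis; ring.
Qed.

Lemma sqnorm_cisB s t :
  sqnorm (cis (2 * PI * s) - cis (2 * PI * t)) = chord (s - t) ^ 2.
Proof.
rewrite /sqnorm /cis /chord /=; to_Rops.
have := cos_2a_sin (PI * (s - t)).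
rewrite (_ : 2 * _ = 2 * PI * s - 2 * PI * t) ?cos_minus; last by ring.
have := sin2_cos2 (2 * PI * s); have := sin2_cos2 (2 * PI * t).
rewrite /Rsqr; nra.
Qed.

Lemma cis_eq1 t : cis (2 * PI * t) = 1%R <-> is_integer t.
Proof.
have cis0 : cis (2 * PI * 0) = 1%R by rewrite Rmult_0_r /cis cos_0 sin_0.
rewrite -chord_eq0 -cis0; split=> [e | h].
- by have := sqnorm_cisB t 0; rewrite e subrr Rminus_0_r /sqnorm /= -R0E; nra.
- apply/eqP; rewrite -subr_eq0; apply/eqP/sqnorm_eq0.
  by rewrite sqnorm_cisB Rminus_0_r h; ring.
Qed.

Lemma cis_prim_root (p : Z) (q : nat) :
  (0 < q)%N -> rel_prime p (Z.of_nat q) ->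
  q.-primitive_root (cis (2 * PI * (IZR p / INR q))).
Proof.
move=> q_gt0 copq; rewrite /primitive_root_of_unity q_gt0; apply/forallP => i.
rewrite unity_rootE cisXn.
have -> : INR i.+1 * (2 * PI * (IZR p / INR q)) = 2 * PI * (INR i.+1 * (IZR p / INR q))
  by ring.
apply/eqP; apply/eqP/eqP => [/cis_eq1 i_int | ->].
- have q_dvd := dvd_of_integer_mul_frac _ _ _ (ssrnat.ltP q_gt0) copq i_int.
  have : Z.le (Z.of_nat q) (Z.of_nat i.+1) by apply: Z.divide_pos_le; first lia.
  by have := ltn_ord i; lia.
- apply/cis_eq1; exists p; field; apply: not_0_INR; lia.
Qed.

Lemma prod_sub_prim_root (F : fieldType) (n : nat) (z w : F) :
  n.-primitive_root z -> (\prod_(1 <= i < n) (w - z ^+ i) = \sum_(i < n) w ^+ i)%R.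
Proof.
move=> prim.
have X_sub1_neq0 : ('X - 1 : {poly F})%R != 0%R by rewrite -polyC1 polyXsubC_eq0.
have := factor_Xn_sub_1 prim.
rewrite big_ltn ?(prim_order_gt0 prim) // expr0 polyC1 subrX1.
move=> /(mulfI X_sub1_neq0) /(congr1 (horner^~ w)).
rewrite horner_prod horner_sum.
by under eq_bigr do rewrite hornerXsubC; under [in RHS]eq_bigr do rewrite hornerXn.
Qed.

Lemma prod_chord_sq (b x : R) (q : nat) :
  q.-primitive_root (cis (2 * PI * b)) ->
  \big[Rmult/1]_(1 <= k < q) chord (INR k * b + x) ^ 2 =
  sqnorm (\sum_(i < q) cis (2 * PI * - x) ^+ i).
Proof.
move=> prim; rewrite -(prod_sub_prim_root _ _ _ _ prim) sqnorm_prod.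
apply: eq_bigr => k _; rewrite cisXn.
have -> : INR k * (2 * PI * b) = 2 * PI * (INR k * b) by ring.
rewrite sqnorm_cisB (_ : - x - INR k * b = - (INR k * b + x)) ?chord_opp; ring.
Qed.

Lemma sqnorm_geom_sum_cis (q : nat) y :
  sqnorm (\sum_(i < q) cis (2 * PI * y) ^+ i) * chord y ^ 2 = chord (INR q * y) ^ 2.
Proof.
have cis0 : cis (2 * PI * 0) = 1%R by rewrite Rmult_0_r /cis cos_0 sin_0.
have -> : chord y ^ 2 = sqnorm (cis (2 * PI * y) - 1)
  by rewrite -cis0 sqnorm_cisB Rminus_0_r.
have -> : chord (INR q * y) ^ 2 = sqnorm (cis (2 * PI * y) ^+ q - 1).
  rewrite -cis0 cisXn (_ : INR q * (2 * PI * y) = 2 * PI * (INR q * y)); last by ring.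
  by rewrite sqnorm_cisB Rminus_0_r.
by rewrite subrX1 sqnormM Rmult_comm.
Qed.

Lemma sqnorm_geom_sum_cis_int (q : nat) y : is_integer y ->
  sqnorm (\sum_(i < q) cis (2 * PI * y) ^+ i) = INR q ^ 2.
Proof.
move=> /cis_eq1 ->; under eq_bigr do rewrite expr1n.
by rewrite sumr_const card_ord sqnorm_natr.
Qed.

Lemma P_sq N b x :
  P N b x ^ 2 = \big[Rmult/1]_(1 <= n < N.+1) chord (INR n * b + x) ^ 2.
Proof.
elim: N => [|N IH]; first by rewrite big_geq //=; ring.
rewrite big_nat_recr // -IH -[P N.+1 b x]/(P N b x * Rabs (chord (INR N.+1 * b + x))).
by rewrite Rpow_mult_distr pow2_abs.
Qed.

Lemma P_mul_P_opp_sq (b x : R) (q N : nat) : is_integer (INR q * b) -> (N < q)%N ->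
  (P N b x * P (q - N - 1)%coq_nat b (- x)) ^ 2 =
  \big[Rmult/1]_(1 <= n < q) chord (INR n * b + x) ^ 2.
Proof.
move=> [m qb] ltNq.
rewrite Rpow_mult_distr !P_sq [RHS](big_cat_nat _ (n := N.+1)) //; congr Rmult.
rewrite (_ : (q - N - 1)%coq_nat.+1 = q - N)%N; last by lia.
rewrite -[N.+1 in RHS]add1n big_addn [LHS]big_nat_rev.
apply: eq_big_nat => i /andP [_ i_lt].
have -> : INR (1 + (q - N) - i.+1) = INR q - INR (i + N).
  by rewrite -minus_INR; [congr INR | ]; lia.
rewrite (_ : _ * b + - x = - (INR (i + N) * b + x) + IZR m); last by rewrite -qb; ring.
by rewrite chord_sq_shift chord_opp; ring.
Qed.

Lemma P_mul_P_opp_sq_geom (p : Z) (q N : nat) x :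
  (0 < q)%N -> rel_prime p (Z.of_nat q) -> (N < q)%N ->
  (P N (IZR p / INR q) x * P (q - N - 1)%coq_nat (IZR p / INR q) (- x)) ^ 2 =
  sqnorm (\sum_(i < q) cis (2 * PI * - x) ^+ i).
Proof.
move=> q_gt0 copq ltNq.
rewrite P_mul_P_opp_sq ?prod_chord_sq ?cis_prim_root //.
by exists p; field; apply: not_0_INR; lia.
Qed.

Lemma P_mul_P_opp_nonint (p : Z) (q N : nat) x :
  (0 < q)%N -> rel_prime p (Z.of_nat q) -> (N < q)%N -> ~ is_integer x ->
  P N (IZR p / INR q) x * P (q - N - 1)%coq_nat (IZR p / INR q) (- x) =
  Rabs (sin (PI * INR q * x)) / Rabs (sin (PI * x)).
Proof.
move=> q_gt0 copq ltNq x_nonint.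
set A := _ * _.
have A_ge0 : 0 <= A by apply: Rmult_le_pos; apply: P_ge0.
have A_sq : A ^ 2 = sqnorm (\sum_(i < q) cis (2 * PI * - x) ^+ i).
  exact: P_mul_P_opp_sq_geom.
have sin_x : Rabs (sin (PI * x)) <> 0.
  by apply: Rabs_no_R0 => s0; apply/x_nonint/chord_eq0; rewrite /chord s0; ring.
have := sqnorm_geom_sum_cis q (- x).
rewrite -A_sq -Rpow_mult_distr => /Rabs_eq_of_pow2_eq.
rewrite (_ : INR q * - x = - (INR q * x)); last by ring.
rewrite !chord_opp Rabs_mult !Rabs_Ropp (Rabs_pos_eq A) // /chord !Rabs_mult => e.
rewrite (Rmult_assoc PI); apply: (Rmult_eq_reg_r (Rabs 2 * Rabs (sin (PI * x)))).
  by rewrite e; field.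
by apply: Rmult_integral_contrapositive_currified => //; rewrite Rabs_pos_eq; lra.
Qed.

Lemma P_mul_P_opp_int (p : Z) (q N : nat) x :
  (0 < q)%N -> rel_prime p (Z.of_nat q) -> (N < q)%N -> is_integer x ->
  P N (IZR p / INR q) x * P (q - N - 1)%coq_nat (IZR p / INR q) (- x) = INR q.
Proof.
move=> q_gt0 copq ltNq /is_integer_opp mx_int.
set A := _ * _.
have A_ge0 : 0 <= A by apply: Rmult_le_pos; apply: P_ge0.
have A_sq : A ^ 2 = sqnorm (\sum_(i < q) cis (2 * PI * - x) ^+ i).
  exact: P_mul_P_opp_sq_geom.
rewrite sqnorm_geom_sum_cis_int // in A_sq.
by rewrite -(Rabs_pos_eq _ A_ge0) -(Rabs_pos_eq _ (pos_INR q)); apply: Rabs_eq_of_pow2_eq.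
Qed.
End ComplexProducts.

Theorem proposition1 (p : Z) (q : nat) (hq : (1 <= q)%nat)
  (hcop : Z.gcd p (Z.of_nat q) = 1%Z) :
  (forall (N : nat) (x : R), (N < q)%nat ->
     (~ is_integer x ->
        P N (IZR p / INR q) x * P (q - N - 1) (IZR p / INR q) (- x) =
        Rabs (sin (PI * INR q * x)) / Rabs (sin (PI * x))) /\
     (is_integer x ->
        P N (IZR p / INR q) x * P (q - N - 1) (IZR p / INR q) (- x) = INR q))
  /\
  (forall x : R,
     (~ is_integer x ->
        P (q - 1) (IZR p / INR q) x =
        Rabs (sin (PI * INR q * x)) / Rabs (sin (PI * x))) /\
     (is_integer x -> P (q - 1) (IZR p / INR q) x = INR q)).
Proof.
have copq : rel_prime p (Z.of_nat q) by apply/Zgcd_1_rel_prime.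
have q_gt0 : ssrnat.leq 1 q by apply/ssrnat.ltP.
split=> [N x /ssrnat.ltP ltNq | x].
  by split; [apply: P_mul_P_opp_nonint | apply: P_mul_P_opp_int].
have P0 : P (q - (q - 1) - 1) (IZR p / INR q) (- x) = 1.
  by rewrite (_ : (q - (q - 1) - 1 = 0)%nat); last lia.
split=> hx; [move: (P_mul_P_opp_nonint p q (q - 1) x) | move: (P_mul_P_opp_int p q (q - 1) x)];
  rewrite P0 Rmult_1_r; apply=> //; apply/ssrnat.ltP; lia.
Qed.
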